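(* Consider the system $\mathbf{x}_{k+1}=f_k(\mathbf{x}_k,\mathbf{w}_k)$, $\mathbf{y}_k=g_k(\mathbf{x}_k,\mathbf{v}_k)$, $k\in\mathbb{N}_0$, and assume that for every $k\in\mathbb{N}_0$ the uncertain variables $\mathbf{w}_0,\dots,\mathbf{w}_k,\mathbf{v}_0,\dots,\mathbf{v}_k,\mathbf{x}_0$ are unrelated. Then: (i) for every $k\in\mathbb{Z}_+$ and $y_{0:k-1}\in\llbracket\mathbf{y}_{0:k-1}\rrbracket$, \[ \llbracket\mathbf{x}_k\,|\,y_{0:k-1}\rrbracket=f_{k-1}\big(\llbracket\mathbf{x}_{k-1}\,|\,y_{0:k-1}\rrbracket,\llbracket\mathbf{w}_{k-1}\rrbracket\big); \] (ii) for every $k\in\mathbb{N}_0$ and $y_{0:k}\in\llbracket\mathbf{y}_{0:k}\rrbracket$, \[ \llbracket\mathbf{x}_k\,|\,y_{0:k}\rrbracket=\Big[\bigcup_{v_k\in\llbracket\mathbf{v}_k\rrbracket}g_{k,v_k}^{-1}(\{y_k\})\Big]\cap\llbracket\mathbf{x}_k\,|\,y_{0:k-1}\rrbracket, \] where $g_{k,v_k}^{-1}(\{y_k\}):=\{x\in\llbracket\mathbf{x}_k\rrbracket: g_k(x,v_k)=y_k\}$ and $\llbracket\mathbf{x}_0\,|\,y_{0:-1}\rrbracket:=\llbracket\mathbf{x}_0\rrbracket$. In particular these sets give the optimal SMF $X_k^*(y_{0:k})=\llbracket\mathbf{x}_k\,|\,y_{0:k}\rrbracket$.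
   Context: Uncertain variables: fix a nonempty set $\Omega$. An uncertain variable is a (measurable) function $\mathbf{x}\colon\Omega\to\mathcal{X}$; a realization is $x=\mathbf{x}(\omega)$. Tuples such as $\mathbf{y}_{0:k}:=(\mathbf{y}_0,\dots,\mathbf{y}_k)$ are regarded as uncertain variables $\omega\mapsto(\mathbf{y}_0(\omega),\dots,\mathbf{y}_k(\omega))$, with realizations $y_{0:k}$. Range: $\llbracket\mathbf{x}\rrbracket:=\{\mathbf{x}(\omega):\omega\in\Omega\}$; joint range $\llbracket\mathbf{u}_1,\dots,\mathbf{u}_r\rrbracket:=\{(\mathbf{u}_1(\omega),\dots,\mathbf{u}_r(\omega)):\omega\in\Omega\}$. Conditional range: $\llbracket\mathbf{x}\,|\,y\rrbracket:=\{\mathbf{x}(\omega):\omega\in\Omega,\ \mathbf{y}(\omega)=y\}$ (conditioning on several values means conditioning on the tuple). Unrelatedness: $\mathbf{u}_1,\dots,\mathbf{u}_r$ are unrelated if $\llbracket\mathbf{u}_1,\dots,\mathbf{u}_r\rrbracket=\llbracket\mathbf{u}_1\rrbracket\times\cdots\times\llbracket\mathbf{u}_r\rrbracket$. System: $\mathbf{x}_k$ takes values in $\llbracket\mathbf{x}_k\rrbracket\subseteq\mathbb{R}^n$, $\mathbf{w}_k$ in $\llbracket\mathbf{w}_k\rrbracket\subseteq\mathbb{R}^p$, $\mathbf{y}_k$ in $\llbracket\mathbf{y}_k\rrbracket\subseteq\mathbb{R}^m$, $\mathbf{v}_k$ in $\llbracket\mathbf{v}_k\rrbracket\subseteq\mathbb{R}^q$;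 $f_k\colon\llbracket\mathbf{x}_k\rrbracket\times\llbracket\mathbf{w}_k\rrbracket\to\llbracket\mathbf{x}_{k+1}\rrbracket$, $g_k\colon\llbracket\mathbf{x}_k\rrbracket\times\llbracket\mathbf{v}_k\rrbracket\to\llbracket\mathbf{y}_k\rrbracket$, with $\mathbf{x}_{k+1}(\omega)=f_k(\mathbf{x}_k(\omega),\mathbf{w}_k(\omega))$ and $\mathbf{y}_k(\omega)=g_k(\mathbf{x}_k(\omega),\mathbf{v}_k(\omega))$. For sets, $f(S,T):=\{f(s,t):s\in S,t\in T\}$. An SMF is a family of set-valued maps $X_k$ with $\{\mathbf{x}_k(\omega):\mathbf{y}_{0:k}(\omega)=y_{0:k}\}\subseteq X_k(y_{0:k})$ for all $k,y_{0:k}$; it is optimal if it is contained in every other SMF for all $k,y_{0:k}$. *)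

From mathcomp Require Import all_boot all_algebra.
From mathcomp Require Import boolp classical_sets reals.
Set Implicit Arguments. Unset Strict Implicit. Unset Printing Implicit Defensive.
Local Open Scope classical_set_scope.

Definition urange (Omega T : Type) (u : Omega -> T) : set T :=
  [set u om | om in [set: Omega]].

(* A realization y_{0:k-1} is encoded by the
   values yr 0, ..., yr (k-1) of yr : nat -> Y (later values are ignored).
   For k = 0 there is no condition, so [[ X | y_{0:-1} ]] = [[ X ]]. *)
Definition cond_range (Omega T Y : Type) (X : Omega -> T) (y : nat -> Omega -> Y)
  (k : nat) (yr : nat -> Y) : set T :=
  [set X om | om in [set om | forall i, (i < k)%N -> y i om = yr i]].

Definition in_joint_range (Omega Y : Type) (y : nat -> Omega -> Y) (k : nat)
  (yr : nat -> Y) : Prop :=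
  exists om : Omega, forall i, (i < k)%N -> y i om = yr i.

Definition fimg2 (A B C : Type) (f : A -> B -> C) (S : set A) (T : set B) : set C :=
  [set c | exists a, S a /\ exists b, T b /\ f a b = c].

(* Unrelatedness of w_0..w_k, v_0..v_k, x_0: their joint range equals the product
   of their individual ranges.  The inclusion of the joint range in the product is
   automatic, so this is the (non-trivial) reverse inclusion, written out. *)
Definition unrelated_wvx (Omega W V X : Type) (w : nat -> Omega -> W)
  (v : nat -> Omega -> V) (x0 : Omega -> X) (k : nat) : Prop :=
  forall (a : nat -> W) (b : nat -> V) (c : X),
    (forall i, (i <= k)%N -> urange (w i) (a i)) ->
    (forall i, (i <= k)%N -> urange (v i) (b i)) ->
    urange x0 c ->
    exists om : Omega,
      (forall i, (i <= k)%N -> w i om = a i) /\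
      (forall i, (i <= k)%N -> v i om = b i) /\ x0 om = c.

Definition is_SMF (Omega Xs Y : Type) (x : nat -> Omega -> Xs) (y : nat -> Omega -> Y)
  (Xf : nat -> (nat -> Y) -> set Xs) : Prop :=
  (forall k (yr yr' : nat -> Y), (forall i, (i <= k)%N -> yr i = yr' i) ->
      Xf k yr = Xf k yr') /\
  (forall k (yr : nat -> Y),
      [set x k om | om in [set om | forall i, (i <= k)%N -> y i om = yr i]]
        `<=` Xf k yr).

Definition is_optimal_SMF (Omega Xs Y : Type) (x : nat -> Omega -> Xs)
  (y : nat -> Omega -> Y) (Xf : nat -> (nat -> Y) -> set Xs) : Prop :=
  is_SMF x y Xf /\
  forall Xf', is_SMF x y Xf' -> forall k yr, Xf k yr `<=` Xf' k yr.

From mathcomp Require Import all_boot all_algebra.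
From mathcomp Require Import boolp classical_sets reals.
Local Open Scope classical_set_scope.

(* Since x_{k+1} = f_k(x_k, w_k), the state x_k(om) is a function
   of x_0(om) and w_{0:k-1}(om) only.  Unrelatedness of w_{0:k}, v_{0:k}, x_0
   then gives a "splicing" principle: from any outcome om and any values
   a in [[w_k]], b in [[v_k]] we can find an outcome om' that agrees with om
   on x_0, w_{0:k-1}, v_{0:k-1} (hence on x_{0:k} and y_{0:k-1}) but has
   w_k(om') = a and v_k(om') = b.
   - (i), prediction: an element f_{k-1}(x, a) of the right-hand side comes
     from an outcome om compatible with y_{0:k-1}; splicing a into w_{k-1}
     while keeping v_{k-1} produces an outcome realizing it on the left.
   - (ii), correction: an element x of the right-hand side comes from an
     outcome om compatible with y_{0:k-1} and a noise value b with
     g_k(x, b) = y_k; splicing b into v_k realizes x on the left.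
   - Optimality of X_k(y_{0:k}) = [[x_k | y_{0:k}]] is immediate from the
     definitions: it is an SMF, and by definition every SMF contains it. *)

Lemma urange_self {Omega T : Type} (u : Omega -> T) (om : Omega) :
  urange u (u om).
Proof. by exists om. Qed.

Lemma cond_range_optimal_SMF (Omega Xs Y : Type) (x : nat -> Omega -> Xs)
    (y : nat -> Omega -> Y) :
  is_optimal_SMF x y (fun k yr => cond_range (x k) y k.+1 yr).
Proof.
split; last by move=> Xf' [_ Xf'_sub] k yr; apply: Xf'_sub.
split=> [k yr yr' eq_yr|k yr z [om y_om <-]]; last by exists om.
apply/seteqP; split=> z [om y_om <-]; exists om => //= i lt_ik.
- by rewrite y_om // eq_yr.
- by rewrite y_om // -eq_yr.
Qed.

Section SetMembershipFilter.
Variables (Omega X W V Y : Type).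
Variables (x : nat -> Omega -> X) (w : nat -> Omega -> W).
Variables (y : nat -> Omega -> Y) (v : nat -> Omega -> V).
Variables (f : nat -> X -> W -> X) (g : nat -> X -> V -> Y).
Hypothesis x_step : forall k om, x k.+1 om = f k (x k om) (w k om).
Hypothesis y_obs : forall k om, y k om = g k (x k om) (v k om).

Lemma state_determined (om om' : Omega) (k : nat) :
  x 0%N om = x 0%N om' -> (forall i, (i < k)%N -> w i om = w i om') ->
  x k om = x k om'.
Proof.
move=> eq_x0; elim: k => [|k IHk] eq_w //.
rewrite !x_step IHk ?eq_w // => i lt_ik; apply: eq_w; exact: ltnW.
Qed.

Hypothesis unrelated : forall k, unrelated_wvx w v (x 0%N) k.

Lemma splice (om : Omega) {k : nat} {a : W} {b : V} :
  urange (w k) a -> urange (v k) b ->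
  exists om' : Omega,
    [/\ w k om' = a, v k om' = b,
        forall i, (i <= k)%N -> x i om' = x i om
      & forall i, (i < k)%N -> y i om' = y i om].
Proof.
move=> wa vb.
(* Overriding the time-k value of a realized sequence by an element of the
   time-k range keeps every coordinate in its range. *)
have upd_range (T : Type) (u : nat -> Omega -> T) c : urange (u k) c ->
    forall i, (i <= k)%N -> urange (u i) ([eta u^~ om with k |-> c] i).
  by move=> uc i _ /=; case: eqP => [->|_] //; apply: urange_self.
have [om' [w_om' [v_om' x0_om']]] := unrelated k _ _ _ (upd_range _ _ _ wa)
  (upd_range _ _ _ vb) (urange_self (x 0%N) om).
have w_past i : (i < k)%N -> w i om' = w i om.
  by move=> lt_ik; rewrite w_om' /= ?ltn_eqF // ltnW.
have v_past i : (i < k)%N -> v i om' = v i om.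
  by move=> lt_ik; rewrite v_om' /= ?ltn_eqF // ltnW.
have x_past i : (i <= k)%N -> x i om' = x i om.
  move=> le_ik; apply: state_determined => // l lt_li.
  exact/w_past/(leq_trans lt_li).
exists om'; split => //.
- by rewrite w_om' //= eqxx.
- by rewrite v_om' //= eqxx.
- by move=> i lt_ik; rewrite !y_obs v_past // x_past // (ltnW lt_ik).
Qed.

Lemma cond_range_predict (j : nat) (yr : nat -> Y) :
  cond_range (x j.+1) y j.+1 yr =
    fimg2 (f j) (cond_range (x j) y j.+1 yr) (urange (w j)).
Proof.
apply/seteqP; split => z /=.
- case=> om /= y_om <-; rewrite x_step.
  exists (x j om); split; first by exists om.
  by exists (w j om); split => //; apply: urange_self.
- case=> _ [[om /= y_om <-]] [a [wa <-]].
  have [om' [w_om' v_om' x_om' y_om']] := splice om wa (urange_self (v j) om).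
  exists om'; last by rewrite x_step x_om' // w_om'.
  move=> i /=; rewrite ltnS leq_eqVlt => /orP [/eqP ->|lt_ij].
  + by rewrite y_obs v_om' x_om' // -y_obs y_om.
  + by rewrite y_om' // y_om // ltnS (ltnW lt_ij).
Qed.

Lemma cond_range_update (k : nat) (yr : nat -> Y) :
  cond_range (x k) y k.+1 yr =
    (\bigcup_(vk in urange (v k))
       [set xx | urange (x k) xx /\ g k xx vk = yr k])
    `&` cond_range (x k) y k yr.
Proof.
apply/seteqP; split => z /=.
- case=> om /= y_om <-; split.
    exists (v k om); first exact: urange_self.
    by split; [apply: urange_self | rewrite -y_obs y_om].
  by exists om => // i lt_ik; apply: y_om; exact: ltnW.
- case=> -[b vb [_ g_zb]] [om /= y_om z_om]; subst z.
  have [om' [_ v_om' x_om' y_om']] := splice om (urange_self (w k) om) vb.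
  exists om'; last exact: x_om'.
  move=> i /=; rewrite ltnS leq_eqVlt => /orP [/eqP ->|lt_ik].
  + by rewrite y_obs v_om' x_om'.
  + by rewrite y_om' // y_om.
Qed.
End SetMembershipFilter.

Theorem theorem2 (R : realType) (n p m q : nat) (Omega : Type)
  (x : nat -> Omega -> 'rV[R]_n) (w : nat -> Omega -> 'rV[R]_p)
  (y : nat -> Omega -> 'rV[R]_m) (v : nat -> Omega -> 'rV[R]_q)
  (f : nat -> 'rV[R]_n -> 'rV[R]_p -> 'rV[R]_n)
  (g : nat -> 'rV[R]_n -> 'rV[R]_q -> 'rV[R]_m) :
  inhabited Omega ->
  (forall k om, x k.+1 om = f k (x k om) (w k om)) ->
  (forall k om, y k om = g k (x k om) (v k om)) ->
  (forall k, unrelated_wvx w v (x 0%N) k) ->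
  (* (i) *)
  (forall (j : nat) (yr : nat -> 'rV[R]_m),
     in_joint_range y j.+1 yr ->
     cond_range (x j.+1) y j.+1 yr =
       fimg2 (f j) (cond_range (x j) y j.+1 yr) (urange (w j))) /\
  (* (ii) *)
  (forall (k : nat) (yr : nat -> 'rV[R]_m),
     in_joint_range y k.+1 yr ->
     cond_range (x k) y k.+1 yr =
       (\bigcup_(vk in urange (v k))
          [set xx | urange (x k) xx /\ g k xx vk = yr k])
       `&` cond_range (x k) y k yr) /\
  (* optimal SMF *)
  is_optimal_SMF x y (fun k yr => cond_range (x k) y k.+1 yr).
Proof.
move=> _ x_step y_obs unrelated.
split; first by move=> j yr _; apply: cond_range_predict.
split; first by move=> k yr _; apply: cond_range_update.
exact: cond_range_optimal_SMF.
Qed.
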